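(* Let $G$ be an abelian group. Then every characteristic subgroup of $G\oplus G$ is fully invariant in $G\oplus G$.
   Context: A subgroup of an abelian group $K$ is characteristic if it is mapped into itself by every automorphism of $K$, and fully invariant if it is mapped into itself by every endomorphism of $K$. *)

From HB Require Import structures.
From mathcomp Require Import all_boot all_algebra.
Set Implicit Arguments. Unset Strict Implicit. Unset Printing Implicit Defensive.
Import GRing.Theory.
Local Open Scope ring_scope.

Definition is_subgroup (K : zmodType) (S : K -> Prop) : Prop :=
  S 0 /\ (forall x y, S x -> S y -> S (x - y)).

Definition is_endomorphism (K : zmodType) (f : K -> K) : Prop :=
  forall x y, f (x + y) = f x + f y.

Definition is_automorphism (K : zmodType) (f : K -> K) : Prop :=
  is_endomorphism f /\ bijective f.

Definition characteristic (K : zmodType) (S : K -> Prop) : Prop :=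
  is_subgroup S /\ forall f, is_automorphism f -> forall x, S x -> S (f x).

Definition fully_invariant (K : zmodType) (S : K -> Prop) : Prop :=
  is_subgroup S /\ forall f, is_endomorphism f -> forall x, S x -> S (f x).

From mathcomp Require Import all_boot all_algebra.
Import GRing.Theory.
Local Open Scope ring_scope.
Set Implicit Arguments. Unset Strict Implicit.

(* Every endomorphism of G ⊕ G is a 2x2 matrix of endomorphisms of G, so it
   is a sum of four maps x ↦ (e x.j) placed in coordinate i.  Each of these
   is a difference of automorphisms applied to x: for the transvection
   t_e(a, b) = (a + e b, b) one has t_e x - x = (e x.2, 0), and composing
   with the coordinate swap moves e to any block.  Hence a characteristic
   subgroup, being closed under automorphisms and differences, is closed
   under every endomorphism. *)

Section Subgroup.
Variables (K : zmodType) (S : K -> Prop).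
Hypothesis subS : is_subgroup S.

Lemma subgroup0 : S 0.
Proof. by case: subS. Qed.

Lemma subgroupB x y : S x -> S y -> S (x - y).
Proof. by case: subS => _; apply. Qed.

Lemma subgroupD x y : S x -> S y -> S (x + y).
Proof.
by move=> Sx Sy; have := subgroupB Sx (subgroupB subgroup0 Sy); rewrite sub0r opprK.
Qed.

End Subgroup.

Lemma can_automorphism (K : zmodType) (f g : K -> K) :
  is_endomorphism f -> cancel f g -> cancel g f -> is_automorphism f.
Proof. by move=> fE fK gK; split; [exact: fE | exact: Bijective fK gK]. Qed.

Lemma characteristic_auto_subr (K : zmodType) (S : K -> Prop) f x :
  characteristic S -> is_automorphism f -> S x -> S (f x - x).
Proof. by case=> subS autS fA Sx; apply: subgroupB => //; apply: autS. Qed.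

Section DirectSquare.
Variable G : zmodType.

Definition pair_swap (x : G * G) : G * G := (x.2, x.1).

Definition transvection (e : G -> G) (x : G * G) : G * G := (x.1 + e x.2, x.2).

Lemma pair_swap_automorphism : is_automorphism pair_swap.
Proof. by apply: (@can_automorphism _ _ pair_swap) => [[a b] []|[]|[]]. Qed.

Lemma transvection_automorphism e :
  is_endomorphism e -> is_automorphism (transvection e).
Proof.
move=> eE; apply: (@can_automorphism _ _ (transvection (fun b => - e b))).
- by move=> [a b] [c d]; rewrite /transvection /= eE addrACA.
- by move=> [a b]; rewrite /transvection /= addrK.
- by move=> [a b]; rewrite /transvection /= subrK.
Qed.

Lemma transvection_subr e x : transvection e x - x = (e x.2, 0).
Proof. by case: x => a b; congr pair; rewrite /= (addrAC, subrr) ?subrr ?add0r. Qed.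

Lemma pair_split (x : G * G) : x = (x.1, 0) + (0, x.2).
Proof. by case: x => a b; congr pair; rewrite /= (addr0, add0r). Qed.

Lemma pairl_morph : {morph (fun a : G => (a, 0 : G)) : a b / a + b}.
Proof. by move=> a b; congr pair; rewrite /= addr0. Qed.

Lemma pairr_morph : {morph (fun b : G => (0 : G, b)) : a b / a + b}.
Proof. by move=> a b; congr pair; rewrite /= addr0. Qed.

Lemma fst_morph : {morph (@fst G G) : u v / u + v}.
Proof. by []. Qed.

Lemma snd_morph : {morph (@snd G G) : u v / u + v}.
Proof. by []. Qed.

Lemma endomorphism_pair_split (f : G * G -> G * G) x :
  is_endomorphism f -> f x = f (x.1, 0) + f (0, x.2).
Proof. by move=> fE; rewrite -fE -pair_split. Qed.

Lemma endomorphism_block (f : G * G -> G * G) (i : G -> G * G) (p : G * G -> G) :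
  is_endomorphism f -> {morph i : a b / a + b} -> {morph p : u v / u + v} ->
  is_endomorphism (p \o f \o i).
Proof. by move=> fE iD pD a b /=; rewrite iD fE pD. Qed.

Lemma characteristic_pair_blocks (S : G * G -> Prop) (e : G -> G) x :
  characteristic S -> is_endomorphism e -> S x ->
  [/\ S (e x.1, 0), S (e x.2, 0), S (0, e x.1) & S (0, e x.2)].
Proof.
move=> charS eE Sx.
have swapS y : S y -> S (pair_swap y).
  by case: charS => _; apply; apply: pair_swap_automorphism.
have upperS y : S y -> S (e y.2, 0).
  move=> Sy; rewrite -transvection_subr.
  exact: characteristic_auto_subr charS (transvection_automorphism eE) Sy.
have S1 := upperS _ (swapS _ Sx); have S2 := upperS _ Sx.
by split=> //; [apply: swapS S1 | apply: swapS S2].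
Qed.

End DirectSquare.

Theorem lemma2p1 (G : zmodType) (S : (G * G)%type -> Prop) :
  characteristic S -> fully_invariant S.
Proof.
move=> charS; split; first by case: charS.
move=> f fE x Sx; have subS : is_subgroup S by case: charS.
have blocks e (eE : is_endomorphism e) := characteristic_pair_blocks charS eE Sx.
have [S11 _ _ _] := blocks _ (endomorphism_block fE (@pairl_morph G) (@fst_morph G)).
have [_ S12 _ _] := blocks _ (endomorphism_block fE (@pairr_morph G) (@fst_morph G)).
have [_ _ S21 _] := blocks _ (endomorphism_block fE (@pairl_morph G) (@snd_morph G)).
have [_ _ _ S22] := blocks _ (endomorphism_block fE (@pairr_morph G) (@snd_morph G)).
rewrite (endomorphism_pair_split x fE) [f (x.1, 0)]pair_split [f (0, x.2)]pair_split.
by apply: (subgroupD subS); apply: (subgroupD subS).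
Qed.
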